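(* For $n\ge2$ and variables $x_1,\dots,x_{n-1}$, $t_1,\dots,t_{n-1}$, $z_1,\dots,z_n$, define $$P_n=\sum_{\sigma\in S_n}(-1)^{\ell(\sigma)}\prod_{m=1}^{n-1}\Big(\prod_{k=1}^{m}(1+t_mz_{\sigma(k)}x_m)\prod_{k=m+1}^{n}(1-z_{\sigma(k)}x_m)\Big).$$ Then $$P_n=x_1\cdots x_{n-1}\prod_{i=1}^{n-1}(1+t_i)\prod_{1\le i<j\le n-1}(x_i+t_jx_j)\prod_{1\le i<j\le n}(z_i-z_j).$$
   Context: $\ell(\sigma)$ denotes the length (number of inversions) of $\sigma\in S_n$. *)

From HB Require Import structures.
From mathcomp Require Import all_boot all_order all_algebra all_fingroup.
Set Implicit Arguments. Unset Strict Implicit. Unset Printing Implicit Defensive.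

Definition perm_length (n : nat) (s : 'S_n) : nat :=
  #|[set p : 'I_n * 'I_n | (p.1 < p.2) && (s p.2 < s p.1)]|.

(* Action of s : 'S_n on 1-based indices {1,...,n} (identity outside). *)
Definition perm_nat (n : nat) (s : 'S_n) (k : nat) : nat :=
  if @insub nat (fun i => i < n) 'I_n k.-1 is Some i then (val (s i)).+1 else k.

(* Writing w_k = z_(s k), the k-th factor of the double product in the summand
   for s is G_k(-w_k), where
     G_k(X) = \prod_(m < k) (1 + x_m X) * \prod_(k <= m < n) (1 - t_m x_m X)
   has degree < n.  Hence the sum is det (G_k(-z_j)) = det (coefficients of the
   G_k) * Vandermonde(-z_1, ..., -z_n).  Consecutive G_k differ by
   (x_k + t_k x_k) X times a polynomial of the same shape with one factor less,
   so subtracting consecutive rows of the coefficient matrix and inducting gives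
   \prod_(i <= j) (x_i + t_j x_j), whose diagonal factors are x_i (1 + t_i).
   That (-1)^(number of inversions) is the sign of s is read off the Vandermonde
   determinant of (0, 1, ..., n-1). *)

From HB Require Import structures.
From mathcomp Require Import all_boot all_order all_algebra all_fingroup.
From mathcomp Require Import ring zify.
Import GRing.Theory Num.Theory.
Local Open Scope ring_scope.

Lemma perm_length_sum n (s : 'S_n) :
  perm_length s = (\sum_(i < n) \sum_(j < n | (i < j)%N) (s j < s i)%N)%N.
Proof.
rewrite /perm_length -sum1_card big_mkcond /=.
under [RHS]eq_bigr do rewrite big_mkcond /=.
rewrite pair_bigA /=.
by apply: eq_bigr => -[i j] _; rewrite inE /=; case: (i < j)%N; case: (s j < s i)%N.
Qed.

Lemma odd_perm_length n (s : 'S_n) : odd (perm_length s) = odd_perm s.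
Proof.
pose v : 'rV[int]_n := \row_j (j : nat)%:Z.
pose vs : 'rV[int]_n := \row_j (s j : nat)%:Z.
pose D (u : 'rV[int]_n) := \prod_(i < n) \prod_(j < n | (i < j)%N) (u 0 j - u 0 i).
have Dv_gt0 : 0 < D v.
  by apply: prodr_gt0 => i _; apply: prodr_gt0 => j ij; rewrite !mxE subr_gt0 ltz_nat.
have Dvs_sign : D vs = (-1) ^+ s * D v.
  rewrite /D -!det_Vandermonde.
  have -> : Vandermonde n vs = col_perm s (Vandermonde n v) by apply/matrixP => i j; rewrite !mxE.
  by rewrite col_permE det_mulmx det_perm odd_permV mulrC.
have Dvs_length : D vs = (-1) ^+ perm_length s * `|D vs|.
  rewrite normr_prod perm_length_sum -prodrXr -big_split; apply: eq_bigr => i _ /=.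
  rewrite normr_prod -prodrXr -big_split; apply: eq_bigr => j _ /=.
  by rewrite {1}[_ - _]numEsign !mxE subr_lt0 ltz_nat.
have : (-1) ^+ perm_length s * D v = (-1) ^+ s * D v :> int.
  by rewrite -Dvs_sign Dvs_length Dvs_sign normrM normr_sign mul1r gtr0_norm.
move/(mulIf (lt0r_neq0 Dv_gt0)).
by rewrite -signr_odd => /signr_inj.
Qed.

Lemma det_perm_length (R : pzRingType) n (A : 'M[R]_n) :
  \det A = \sum_(s : 'S_n) (-1) ^+ perm_length s * \prod_i A i (s i).
Proof.
by apply: eq_bigr => s _; rewrite -[(-1) ^+ perm_length s]signr_odd odd_perm_length.
Qed.

Section PolynomialMatrices.
Variable R : comNzRingType.

Lemma size_prod_linear (I : Type) (r : seq I) (c : I -> R) :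
  (size (\prod_(i <- r) (1 + (c i)%:P * 'X))%R <= (size r).+1)%N.
Proof.
elim: r => [|i r IHr]; first by rewrite big_nil size_poly1.
have size_lin : (size (1 + (c i)%:P * 'X)%R <= 2)%N.
  by rewrite addrC -polyC1 size_MXaddC; case: ifP => // _; rewrite ltnS size_polyC_leq1.
rewrite big_cons; apply: leq_trans (size_mul_leq _ _) _.
by move: size_lin IHr => /=; lia.
Qed.

Lemma det_horner_mx n (p : 'I_n -> {poly R}) (w : 'I_n -> R) :
    (forall k, size (p k) <= n)%N ->
  \det (\matrix_(k, j) (p k).[w j]) =
    \det (\matrix_(k, i < n) (p k)`_i) *
    \prod_(i < n) \prod_(j < n | (i < j)%N) (w j - w i).
Proof.
move=> size_p; have -> : \matrix_(k, j) (p k).[w j] =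
    \matrix_(k, i < n) (p k)`_i *m Vandermonde n (\row_j w j).
  apply/matrixP => k j; rewrite !mxE (horner_coef_wide _ (size_p k)).
  by apply: eq_bigr => i _; rewrite !mxE.
rewrite det_mulmx det_Vandermonde.
by under eq_bigr do under eq_bigr do rewrite !mxE.
Qed.

End PolynomialMatrices.

Lemma det_row_diffs (R : comPzRingType) n (A : 'M[R]_n.+1) :
    (forall k, A k 0 = 1) ->
  \det A = \det (\matrix_(k, l)
     (A (lift 0 k) (lift 0 l) - A (widen_ord (leqnSn n) k) (lift 0 l))).
Proof.
move=> A_col0; pose S : 'M[R]_n.+1 := \matrix_(k, l) ((k == l.+1 :> nat)%:R).
have det_1S : \det (1%:M - S) = 1.
  rewrite det_trig; last first.
    apply/is_trig_mxP => i j lt_ij; rewrite !mxE (ltn_eqF (leq_trans lt_ij (leqnSn _))).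
    by rewrite -val_eqE /= (ltn_eqF lt_ij) subrr.
  by apply: big1 => i _; rewrite !mxE eqxx (ltn_eqF (ltnSn _)) subr0.
have diffA0 l : (A - S *m A) 0 l = A 0 l.
  by rewrite 2!mxE mxE big1 ?subr0 // => k _; rewrite mxE mul0r.
have diffA_lift k l :
    (A - S *m A) (lift 0 k) l = A (lift 0 k) l - A (widen_ord (leqnSn n) k) l.
  rewrite 2!mxE mxE (bigD1 (widen_ord (leqnSn n) k)) //= big1 ?addr0.
    by rewrite mxE lift0 eqxx mul1r.
  move=> j /eqP neq_jk; rewrite mxE lift0 /=; case: eqP => [[eq_kj]|]; last by rewrite mul0r.
  by case: neq_jk; apply: val_inj.
rewrite -[LHS]mul1r -det_1S -det_mulmx mulmxBl mul1mx (expand_det_col _ 0).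
rewrite big_ord_recl big1 ?addr0 => [|k _]; last first.
  by rewrite diffA_lift !A_col0 (subrr (1 : R)) mul0r.
rewrite diffA0 A_col0 mul1r /cofactor expr0 mul1r.
by congr (\det _); apply/matrixP => k l; rewrite [LHS]mxE [LHS]mxE diffA_lift mxE.
Qed.

Section StaircasePolynomials.
Variable R : comNzRingType.
Implicit Types (a b : nat -> R) (n k : nat).

Definition gpoly n a b k : {poly R} :=
  \prod_(0 <= m < k) (1 + (a m)%:P * 'X) * \prod_(k <= m < n) (1 - (b m)%:P * 'X).

Definition gcoef_mx n a b : 'M[R]_n.+1 := \matrix_(k, i) (gpoly n a b k)`_i.

Lemma coef0_gpoly n a b k : (gpoly n a b k)`_0 = 1.
Proof.
rewrite -horner_coef0 hornerM !horner_prod.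
by rewrite !big1 ?mulr1 // => m _; rewrite !hornerE ?mulr0 ?subr0 ?addr0.
Qed.

Lemma size_gpoly n a b k : (k <= n)%N -> (size (gpoly n a b k) <= n.+1)%N.
Proof.
move=> le_kn; rewrite /gpoly; apply: leq_trans (size_mul_leq _ _) _.
have size_a := @size_prod_linear R nat (index_iota 0 k) a.
have size_b := @size_prod_linear R nat (index_iota k n) (fun m => - b m).
under [in X in (_ + X)%N]eq_bigr do rewrite -mulNr -polyCN.
by move: size_a size_b; rewrite /index_iota !size_iota; set u := size _; set v := size _; lia.
Qed.

Lemma gpolyS_sub n a b k : (k <= n)%N ->
  gpoly n.+1 a b k.+1 - gpoly n.+1 a b k =
  (a k + b k)%:P * ('X * gpoly n a (fun m => b m.+1) k).
Proof.
move=> le_kn; rewrite /gpoly big_nat_recr //= (big_ltn (leq_ltn_trans le_kn (ltnSn n))).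
rewrite big_add1 polyCD /=; ring.
Qed.

Lemma det_gcoef_mx n a b :
  \det (gcoef_mx n a b) = \prod_(i < n) \prod_(i <= j < n) (a i + b j).
Proof.
elim: n b => [|n IHn] b; first by rewrite det_mx11 mxE coef0_gpoly big_ord0.
rewrite det_row_diffs => [|k]; last by rewrite mxE coef0_gpoly.
have -> : \matrix_(k, l) (gcoef_mx n.+1 a b (lift 0 k) (lift 0 l) -
                          gcoef_mx n.+1 a b (widen_ord (leqnSn _) k) (lift 0 l)) =
    diag_mx (\row_k (a k + b k)) *m gcoef_mx n a (fun m => b m.+1).
  apply/matrixP => k l; rewrite mul_diag_mx !mxE !lift0 /= -coefB.
  by rewrite gpolyS_sub ?coefCM ?coefXM // -ltnS.
rewrite det_mulmx det_diag IHn.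
rewrite [RHS](eq_bigr (fun i : 'I_n.+1 => (a i + b i) * \prod_(i <= j < n) (a i + b j.+1))).
  rewrite big_split /= [X in _ = _ * X]big_ord_recr /= big_geq // mulr1.
  by congr (_ * _); apply: eq_bigr => i _; rewrite mxE.
by move=> i _; rewrite big_ltn // big_add1.
Qed.

Lemma prod_staircase_gpoly q (x t w : nat -> R) :
  \prod_(1 <= m < q.+1) (\prod_(1 <= k < m.+1) (1 + t m * w k * x m) *
                         \prod_(m.+1 <= k < q.+2) (1 - w k * x m)) =
  \prod_(k < q.+1) (gpoly q (fun m => x m.+1) (fun m => t m.+1 * x m.+1) k).[- w k.+1].
Proof.
have merge m : (1 <= m < q.+1)%N ->
    \prod_(1 <= k < m.+1) (1 + t m * w k * x m) *
    \prod_(m.+1 <= k < q.+2) (1 - w k * x m) =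
    \prod_(1 <= k < q.+2) (if (k <= m)%N then 1 + t m * w k * x m else 1 - w k * x m).
  case/andP=> m_gt0 lt_mq; rewrite [RHS](big_cat_nat (n := m.+1)) //=; last exact: ltnW.
  congr (_ * _); apply: eq_big_nat => k /andP[lo hi]; first by rewrite -ltnS hi.
  by rewrite leqNgt lo.
rewrite (eq_big_nat _ _ merge) exchange_big_nat big_add1 /= big_mkord.
apply: eq_bigr => k _; rewrite big_add1 /= /gpoly hornerM !horner_prod.
rewrite (big_cat_nat (n := k)) //=; last by rewrite -ltnS.
congr (_ * _); apply: eq_big_nat => m /andP[lo hi]; rewrite ltnS.
  by rewrite leqNgt hi /= !hornerE; ring.
by rewrite lo /= !hornerE; ring.
Qed.

End StaircasePolynomials.

Arguments gpoly {R} n a b k.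

Section Reindexing.
Variable R : comNzRingType.

Lemma prod_leq_pairs_diag (F : nat -> nat -> R) m n :
  \prod_(m <= i < n) \prod_(i <= j < n) F i j =
  \prod_(m <= i < n) F i i * \prod_(m <= i < n) \prod_(i.+1 <= j < n) F i j.
Proof. by rewrite -big_split; apply: eq_big_nat => i /andP[_ lt_in]; rewrite big_ltn. Qed.

Lemma prod_x_t_pairs q (x t : nat -> R) :
  \prod_(i < q) \prod_(i <= j < q) (x i.+1 + t j.+1 * x j.+1) =
  (\prod_(1 <= i < q.+1) x i) * (\prod_(1 <= i < q.+1) (1 + t i)) *
  \prod_(1 <= i < q.+1) \prod_(i.+1 <= j < q.+1) (x i + t j * x j).
Proof.
rewrite -big_split /= (eq_bigr (fun i => x i + t i * x i)) => [|i _]; last by ring.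
rewrite -prod_leq_pairs_diag big_add1 big_mkord.
by apply: eq_bigr => i _; rewrite big_add1.
Qed.

Lemma prod_opp_pairs q (z : nat -> R) :
  \prod_(i < q) \prod_(j < q | (i < j)%N) (- z j.+1 - - z i.+1) =
  \prod_(1 <= i < q.+1) \prod_(i.+1 <= j < q.+1) (z i - z j).
Proof.
rewrite big_add1 big_mkord; apply: eq_bigr => i _.
rewrite big_add1 big_geq_mkord; apply: eq_big => [j | j _]; first by rewrite andTb.
by rewrite opprK addrC.
Qed.

End Reindexing.

Lemma perm_nat_lift n (s : 'S_n) (k : 'I_n) : perm_nat s k.+1 = (s k).+1.
Proof.
rewrite /perm_nat; case: insubP => [i _ val_i|]; last by rewrite /= ltn_ord.
by congr _.+1; congr (val (s _)); apply: val_inj.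
Qed.

Theorem mainTheorem8 (R : comNzRingType) (n : nat) (hn : (2 <= n)%N)
    (x t z : nat -> R) :
  \sum_(s : 'S_n) (-1) ^+ perm_length s *
     \prod_(1 <= m < n)
        ((\prod_(1 <= k < m.+1) (1 + t m * z (perm_nat s k) * x m)) *
         (\prod_(m.+1 <= k < n.+1) (1 - z (perm_nat s k) * x m)))
  = (\prod_(1 <= i < n) x i) * (\prod_(1 <= i < n) (1 + t i)) *
    (\prod_(1 <= i < n) \prod_(i.+1 <= j < n) (x i + t j * x j)) *
    (\prod_(1 <= i < n.+1) \prod_(i.+1 <= j < n.+1) (z i - z j)).
Proof.
case: n hn => [|q] // _.
set a := fun m => x m.+1; set b := fun m => t m.+1 * x m.+1.
transitivity (\det (\matrix_(k < q.+1, j < q.+1) (gpoly q a b k).[- z j.+1])).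
  rewrite det_perm_length; apply: eq_bigr => s _; congr (_ * _).
  by rewrite prod_staircase_gpoly; apply: eq_bigr => k _; rewrite perm_nat_lift mxE.
rewrite det_horner_mx => [|k]; last by rewrite size_gpoly // -ltnS.
by rewrite det_gcoef_mx prod_x_t_pairs prod_opp_pairs.
Qed.
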